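(* Let $(G,X,\Gamma)$ be a $(\mu,\nu)$-path system group containing a $\delta$-constricting element $(g,A)$ with $\delta$-constricting map $\pi_A\colon X\to A$. There exists $\theta\ge0$ such that for all $x,x'\in X$ and all $m\in\mathbb Z$, $$d_A(x,g^mx')\ge |m|\,[g]^\infty-d_A(x,x')-\theta.$$
   Context: A path is a rectifiable continuous map $\alpha\colon[a,b]\to X$ parametrised by arc length; it is a $(\kappa,\lambda)$-quasi-geodesic if $d(\alpha(t),\alpha(t'))\le|t-t'|\le\kappa d(\alpha(t),\alpha(t'))+\lambda$. A $(\mu,\nu)$-path system group $(G,X,\Gamma)$ is a group $G$ acting properly by isometries on a geodesic metric space $X$ together with a $G$-invariant collection $\Gamma$ of paths closed under subpaths, such that any two points are joined by an element of $\Gamma$ and every element is a $(\mu,\nu)$-quasi-geodesic. A map $\pi_A\colon X\to A$ is $\delta$-constricting if (CS1) $d(x,\pi_A(x))\le\delta$ for $x\in A$, and (CS2) for all $x,y\in X$ and $\gamma\in\Gamma$ joining them, if $d(\pi_A(x),\pi_A(y))>\delta$ then $\gamma$ meets $B_X(\pi_A(x),\delta)$ and $B_X(\pi_A(y),\delta)$. An element $g$ is $\delta$-constricting, written $(g,A)$, if it has infinite order and $A$ is a $\langle g\rangle$-invariant subset with a $\delta$-constricting map $\pi_A$, on which $\langle g\rangle$ acts $\delta$-coboundedly. $d_A(x,y)=d(\pi_A(x),\pi_A(y))$. The asymptotic translation length is $[g]^\infty=\limsup_{m\to\infty}\frac1m d(o,g^mo)$ for any $o\in X$. *)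

From Stdlib Require Import Reals List ZArith.
From Coquelicot Require Import Coquelicot.
Open Scope R_scope.

Section Defs.
Context {X G : Type} (d : X -> X -> R).

Definition is_metric : Prop :=
  (forall x y, 0 <= d x y) /\ (forall x y, d x y = 0 <-> x = y) /\
  (forall x y, d x y = d y x) /\ (forall x y z, d x z <= d x y + d y z).

Definition is_geodesic_space : Prop :=
  forall x y, exists gam : R -> X, gam 0 = x /\ gam (d x y) = y /\
    forall s t, 0 <= s <= d x y -> 0 <= t <= d x y -> d (gam s) (gam t) = Rabs (s - t).

Fixpoint chain_len (f : R -> X) (t0 : R) (l : list R) : R :=
  match l with nil => 0 | t1 :: l' => d (f t0) (f t1) + chain_len f t1 l' end.

Fixpoint incr_from (t0 : R) (l : list R) : Prop :=
  match l with nil => True | t1 :: l' => t0 <= t1 /\ incr_from t1 l' end.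

Definition path_length (f : R -> X) (s t L : R) : Prop :=
  is_lub (fun v => exists l, incr_from s l /\ last l s = t /\ v = chain_len f s l) L.

(* a (rectifiable, continuous) path [a,b] -> X parametrised by arc length *)
Definition is_path (f : R -> X) (a b : R) : Prop :=
  a <= b /\
  (forall t, a <= t <= b -> forall eps, 0 < eps -> exists eta, 0 < eta /\
      forall s, a <= s <= b -> Rabs (s - t) < eta -> d (f s) (f t) < eps) /\
  (forall s t, a <= s -> s <= t -> t <= b -> path_length f s t (t - s)).

Definition quasi_geodesic (f : R -> X) (a b kappa lambda : R) : Prop :=
  forall t t', a <= t <= b -> a <= t' <= b ->
    d (f t) (f t') <= Rabs (t - t') /\ Rabs (t - t') <= kappa * d (f t) (f t') + lambda.

Definition joins (f : R -> X) (a b : R) (x y : X) : Prop :=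
  (f a = x /\ f b = y) \/ (f a = y /\ f b = x).

Variables (mul : G -> G -> G) (e : G) (inv : G -> G) (act : G -> X -> X).

Definition is_group : Prop :=
  (forall g h k, mul g (mul h k) = mul (mul g h) k) /\
  (forall g, mul e g = g) /\ (forall g, mul g e = g) /\
  (forall g, mul (inv g) g = e) /\ (forall g, mul g (inv g) = e).

Definition isometric_action : Prop :=
  (forall x, act e x = x) /\ (forall g h x, act (mul g h) x = act g (act h x)) /\
  (forall g x y, d (act g x) (act g y) = d x y).

Definition proper_action : Prop :=
  forall x r, exists l : list G, forall g, d x (act g x) <= r -> In g l.

(* Gam a b f : the path f restricted to [a,b] belongs to the path system *)
Definition path_system (Gam : R -> R -> (R -> X) -> Prop) (mu nu : R) : Prop :=
  (forall a b f, Gam a b f -> is_path f a b) /\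
  (forall g a b f, Gam a b f -> Gam a b (fun t => act g (f t))) /\
  (forall a b f c c', Gam a b f -> a <= c -> c <= c' -> c' <= b -> Gam c c' f) /\
  (forall x y, exists a b f, Gam a b f /\ joins f a b x y) /\
  (forall a b f, Gam a b f -> quasi_geodesic f a b mu nu).

Definition path_system_group (Gam : R -> R -> (R -> X) -> Prop) (mu nu : R) : Prop :=
  is_metric /\ is_geodesic_space /\ is_group /\ isometric_action /\ proper_action /\
  path_system Gam mu nu.

Fixpoint gpow_nat (g : G) (n : nat) : G :=
  match n with O => e | S n' => mul g (gpow_nat g n') end.

Definition gpow (g : G) (z : Z) : G :=
  match z with
  | Z0 => e
  | Zpos p => gpow_nat g (Pos.to_nat p)
  | Zneg p => inv (gpow_nat g (Pos.to_nat p))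
  end.

(* closed balls B_X(p, delta) = {z | d z p <= delta} *)
Definition constricting_map (Gam : R -> R -> (R -> X) -> Prop)
    (A : X -> Prop) (pi : X -> X) (delta : R) : Prop :=
  (forall x, A (pi x)) /\
  (forall x, A x -> d x (pi x) <= delta) /\
  (forall x y a b f, Gam a b f -> joins f a b x y -> d (pi x) (pi y) > delta ->
     (exists t, a <= t <= b /\ d (f t) (pi x) <= delta) /\
     (exists t, a <= t <= b /\ d (f t) (pi y) <= delta)).

Definition constricting_element (Gam : R -> R -> (R -> X) -> Prop)
    (g : G) (A : X -> Prop) (pi : X -> X) (delta : R) : Prop :=
  (forall n : nat, (0 < n)%nat -> gpow_nat g n <> e) /\
  (forall (z : Z) x, A x -> A (act (gpow g z) x)) /\
  (exists o, A o /\ forall a, A a -> exists z : Z, d a (act (gpow g z) o) <= delta) /\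
  constricting_map Gam A pi delta.

(* [g]^infty = limsup_m d(o, g^m o) / m *)
Definition asymp_trans (g : G) (o : X) : R :=
  real (LimSup_seq (fun n => d o (act (gpow_nat g n) o) / INR n)).

End Defs.

From Stdlib Require Import Reals ZArith Lra Lia.
From Coquelicot Require Import Coquelicot.
Open Scope R_scope.

(* Two constricting maps onto the same set A are uniformly close: a path from x
   to pi x passes near pi' x and must then come back near pi x, which the
   quasi-geodesic bound allows only if pi x and pi' x are close.  Since
   y |-> g^m pi (g^-m y) is again constricting onto A, pi commutes with g^m up to
   a uniform error theta, so d_A(x, g^m x') >= d(pi x', g^m pi x') - d_A(x, x') - theta.
   Finally every orbit displacement d(w, g^n w) is at least n [g]^infty, by
   subadditivity of n |-> d(w, g^n w) and independence of the basepoint. *)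

Lemma real_LimSup_div_le (u : nat -> R) (c B : R) :
  0 <= c -> (forall N, u N <= INR N * c + B) ->
  real (LimSup_seq (fun N => u N / INR N)) <= c.
Proof.
  intros Hc Hu.
  assert (Hev : forall eps, 0 < eps ->
            Rbar_le (LimSup_seq (fun N => u N / INR N)) (c + eps)).
  { intros eps Heps.
    rewrite <- (LimSup_seq_const (c + eps)).
    apply LimSup_le.
    destruct (INR_archimed eps B) as [N0 HN0]; [lra|].
    exists (S N0). intros N HN.
    assert (HN0N : INR N0 <= INR N) by (apply le_INR; lia).
    assert (HNpos : 0 < INR N) by (apply lt_0_INR; lia).
    apply Rle_div_l; [lra|].
    specialize (Hu N). nra. }
  destruct (LimSup_seq (fun N => u N / INR N)) as [l| |]; simpl; [|lra|lra].
  destruct (Rle_or_lt l c) as [Hle|Hlt]; [exact Hle|].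
  specialize (Hev ((l - c) / 2) ltac:(lra)). simpl in Hev. lra.
Qed.

Lemma Rabs_sub_between {u v t1 t2 : R} :
  Rmin u v <= t1 <= Rmax u v -> Rmin u t1 <= t2 <= Rmax u t1 ->
  Rabs (t1 - t2) <= Rabs (v - t2).
Proof.
  unfold Rmin, Rmax.
  destruct (Rle_dec u v), (Rle_dec u t1); unfold Rabs;
    repeat destruct Rcase_abs; lra.
Qed.

Lemma between_in_interval {a b s s' t : R} :
  a <= s <= b -> a <= s' <= b -> Rmin s s' <= t <= Rmax s s' -> a <= t <= b.
Proof. unfold Rmin, Rmax; destruct (Rle_dec s s'); lra. Qed.

Section ConstrictingMaps.

Context {X : Type} {d : X -> X -> R} {Gam : R -> R -> (R -> X) -> Prop} {mu nu : R}.

Hypothesis d_metric : is_metric d.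
Hypothesis Gam_interval : forall {a b f}, Gam a b f -> a <= b.
Hypothesis Gam_subpath : forall {a b f c c'},
  Gam a b f -> a <= c -> c <= c' -> c' <= b -> Gam c c' f.
Hypothesis Gam_connects : forall x y, exists a b f, Gam a b f /\ joins f a b x y.
Hypothesis Gam_quasi_geodesic : forall {a b f}, Gam a b f -> quasi_geodesic d f a b mu nu.

Let d_nonneg x y : 0 <= d x y := proj1 d_metric x y.
Let d_sym x y : d x y = d y x := proj1 (proj2 (proj2 d_metric)) x y.
Let d_triangle x y z : d x z <= d x y + d y z := proj2 (proj2 (proj2 d_metric)) x y z.

Lemma Gam_path_through (x y : X) :
  exists a b f u v, Gam a b f /\ a <= u <= b /\ a <= v <= b /\ f u = x /\ f v = y.
Proof.
  destruct (Gam_connects x y) as (a & b & f & Hf & [[Ea Eb] | [Ea Eb]]);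
    pose proof (Gam_interval Hf).
  - exists a, b, f, a, b; repeat split; auto; lra.
  - exists a, b, f, b, a; repeat split; auto; lra.
Qed.

Lemma Gam_dist_le_param {a b f t t'} :
  Gam a b f -> a <= t <= b -> a <= t' <= b -> d (f t) (f t') <= Rabs (t - t').
Proof. intros Hf Ht Ht'. exact (proj1 (Gam_quasi_geodesic Hf t t' Ht Ht')). Qed.

Lemma Gam_param_le_dist {a b f t t'} :
  Gam a b f -> a <= t <= b -> a <= t' <= b ->
  Rabs (t - t') <= Rabs mu * d (f t) (f t') + Rabs nu.
Proof.
  intros Hf Ht Ht'.
  pose proof (proj2 (Gam_quasi_geodesic Hf t t' Ht Ht')).
  pose proof (Rle_abs mu). pose proof (Rle_abs nu).
  pose proof (d_nonneg (f t) (f t')). nra.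
Qed.

Section OneMap.

Context {A : X -> Prop} {pi : X -> X} {delta : R}.
Hypothesis pi_constricting : constricting_map d Gam A pi delta.

Lemma constricting_delta_nonneg (x : X) : 0 <= delta.
Proof.
  destruct pi_constricting as (HA & Hclose & _).
  pose proof (Hclose _ (HA x)). pose proof (d_nonneg (pi x) (pi (pi x))). lra.
Qed.

Lemma constricting_subpath {a b f s s'} :
  Gam a b f -> a <= s <= b -> a <= s' <= b ->
  d (pi (f s)) (pi (f s')) > delta ->
  exists t, Rmin s s' <= t <= Rmax s s' /\ d (f t) (pi (f s)) <= delta.
Proof.
  intros Hf Hs Hs' Hfar.
  destruct pi_constricting as (_ & _ & Hcs).
  assert (Hsub : Gam (Rmin s s') (Rmax s s') f).
  { apply (Gam_subpath Hf).
    - apply Rmin_glb; lra.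
    - apply Rmin_Rmax.
    - apply Rmax_lub; lra. }
  assert (Hj : joins f (Rmin s s') (Rmax s s') (f s) (f s')).
  { unfold joins, Rmin, Rmax. destruct (Rle_dec s s'); auto. }
  exact (proj1 (Hcs _ _ _ _ _ Hsub Hj Hfar)).
Qed.

Lemma dist_proj_near (y a0 : X) :
  A a0 -> d y a0 <= delta ->
  d y (pi y) <= 3 * delta + (Rabs mu * delta + Rabs nu).
Proof.
  intros Ha0 Hya0.
  pose proof (constricting_delta_nonneg y) as Hdelta.
  pose proof (Rabs_pos mu). pose proof (Rabs_pos nu).
  assert (0 <= Rabs mu * delta) by (apply Rmult_le_pos; lra).
  destruct (Rle_or_lt (d (pi y) (pi a0)) delta) as [Hnear | Hfar].
  - pose proof (proj1 (proj2 pi_constricting) a0 Ha0).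
    pose proof (d_triangle y a0 (pi a0)). pose proof (d_triangle y (pi a0) (pi y)).
    rewrite (d_sym (pi a0) (pi y)) in *. lra.
  - destruct (Gam_path_through y a0) as (a & b & f & u & v & Hf & Hu & Hv & Eu & Ev).
    rewrite <- Eu, <- Ev in Hfar.
    destruct (constricting_subpath Hf Hu Hv Hfar) as (t & Ht & Hft).
    pose proof (between_in_interval Hu Hv Ht) as Htab.
    pose proof (Gam_dist_le_param Hf Hu Htab).
    pose proof (Gam_param_le_dist Hf Hu Hv). rewrite Eu, Ev in *.
    assert (Rabs (u - t) <= Rabs (u - v)).
    { unfold Rmin, Rmax in Ht. destruct (Rle_dec u v); unfold Rabs;
        repeat destruct Rcase_abs; lra. }
    assert (Rabs mu * d y a0 <= Rabs mu * delta) by (apply Rmult_le_compat_l; lra).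
    pose proof (d_triangle y (f t) (pi y)). lra.
Qed.

End OneMap.

(* Follow a path from [x] to [pi x]: it passes near [pi' x], then near [pi x]
   again before reaching it, and the quasi-geodesic bound forces the two
   passages to be close in parameter. *)
Lemma constricting_maps_close {A : X -> Prop} {pi pi' : X -> X} {delta : R} (x : X) :
  constricting_map d Gam A pi delta -> constricting_map d Gam A pi' delta ->
  d (pi x) (pi' x) <= 5 * delta + (Rabs mu * delta + Rabs nu).
Proof.
  intros Hpi Hpi'.
  set (p := pi x). set (q := pi' x).
  pose proof (constricting_delta_nonneg Hpi x) as Hdelta.
  pose proof (Rabs_pos mu). pose proof (Rabs_pos nu).
  assert (0 <= Rabs mu * delta) by (apply Rmult_le_pos; lra).
  destruct (Rle_or_lt (d p q) (5 * delta + (Rabs mu * delta + Rabs nu)))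
    as [Hle | Hfar]; [exact Hle | exfalso].
  destruct (Gam_path_through x p) as (a & b & f & u & v & Hf & Hu & Hv & Eu & Ev).
  assert (Hfar' : d (pi' (f u)) (pi' (f v)) > delta).
  { rewrite Eu, Ev. fold q.
    assert (d (pi' p) p <= delta)
      by (rewrite d_sym; apply (proj1 (proj2 Hpi')), (proj1 Hpi)).
    pose proof (d_triangle q (pi' p) p). rewrite (d_sym q p) in *. lra. }
  destruct (constricting_subpath Hpi' Hf Hu Hv Hfar') as (t1 & Ht1 & Hnear_q).
  rewrite Eu in Hnear_q. fold q in Hnear_q.
  pose proof (between_in_interval Hu Hv Ht1) as Ht1ab.
  pose proof (dist_proj_near Hpi _ _ (proj1 Hpi' x) Hnear_q) as Hproj.
  assert (Hfar'' : d (pi (f u)) (pi (f t1)) > delta).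
  { rewrite Eu. fold p.
    pose proof (d_triangle p (pi (f t1)) q).
    pose proof (d_triangle (pi (f t1)) (f t1) q).
    rewrite (d_sym (pi (f t1)) (f t1)) in *. lra. }
  destruct (constricting_subpath Hpi Hf Hu Ht1ab Hfar'') as (t2 & Ht2 & Hnear_p).
  rewrite Eu in Hnear_p. fold p in Hnear_p.
  pose proof (between_in_interval Hu Ht1ab Ht2) as Ht2ab.
  pose proof (Rabs_sub_between Ht1 Ht2).
  pose proof (Gam_param_le_dist Hf Hv Ht2ab). rewrite Ev in *.
  pose proof (Gam_dist_le_param Hf Ht1ab Ht2ab).
  assert (Rabs mu * d p (f t2) <= Rabs mu * delta)
    by (apply Rmult_le_compat_l; [lra | rewrite d_sym; exact Hnear_p]).
  pose proof (d_triangle p (f t2) q). pose proof (d_triangle (f t2) (f t1) q).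
  rewrite (d_sym (f t2) p), (d_sym (f t2) (f t1)) in *. lra.
Qed.

Lemma constricting_map_conj {A : X -> Prop} {pi : X -> X} {delta : R} {phi psi : X -> X} :
  constricting_map d Gam A pi delta ->
  (forall y, phi (psi y) = y) ->
  (forall y z, d (phi y) (phi z) = d y z) ->
  (forall y, A y -> A (phi y)) -> (forall y, A y -> A (psi y)) ->
  (forall a b f, Gam a b f -> Gam a b (fun t => psi (f t))) ->
  constricting_map d Gam A (fun y => phi (pi (psi y))) delta.
Proof.
  intros (HA & Hclose & Hcs) Hcancel Hphi Aphi Apsi Gpsi.
  split; [|split].
  - intros y. apply Aphi, HA.
  - intros y Hy. rewrite <- (Hcancel y) at 1. rewrite Hphi. apply Hclose, Apsi, Hy.
  - intros y z a b f Hf Hj Hfar.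
    assert (Hj' : joins (fun t => psi (f t)) a b (psi y) (psi z)).
    { destruct Hj as [[E1 E2] | [E1 E2]]; [left | right]; rewrite E1, E2; auto. }
    rewrite Hphi in Hfar.
    destruct (Hcs _ _ _ _ _ (Gpsi _ _ _ Hf) Hj' Hfar) as ((t & Ht & H1) & (t' & Ht' & H2)).
    split; [exists t | exists t']; split; auto; rewrite <- (Hcancel (f _)), Hphi; assumption.
Qed.

End ConstrictingMaps.

Section Orbits.

Context {X G : Type} {d : X -> X -> R} {mul : G -> G -> G} {e : G} {inv : G -> G}
  {act : G -> X -> X}.

Hypothesis d_metric : is_metric d.
Hypothesis G_group : is_group mul e inv.
Hypothesis act_isometric : isometric_action d mul e act.

Let d_nonneg x y : 0 <= d x y := proj1 d_metric x y.
Let d_refl x : d x x = 0 := proj2 (proj1 (proj2 d_metric) x x) eq_refl.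
Let d_sym x y : d x y = d y x := proj1 (proj2 (proj2 d_metric)) x y.
Let d_triangle x y z : d x z <= d x y + d y z := proj2 (proj2 (proj2 d_metric)) x y z.
Let act_1 x : act e x = x := proj1 act_isometric x.
Let act_mul h k x : act (mul h k) x = act h (act k x) := proj1 (proj2 act_isometric) h k x.
Let act_dist h x y : d (act h x) (act h y) = d x y := proj2 (proj2 act_isometric) h x y.

Variable g : G.

Lemma gpow_nat_add (a b : nat) :
  gpow_nat mul e g (a + b) = mul (gpow_nat mul e g a) (gpow_nat mul e g b).
Proof.
  destruct G_group as (mul_assoc & mul_1l & _).
  induction a as [|a IH]; simpl.
  - now rewrite mul_1l.
  - now rewrite IH, mul_assoc.
Qed.

Lemma dist_orbit_add (w : X) (a b : nat) :
  d w (act (gpow_nat mul e g (a + b)) w) <=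
  d w (act (gpow_nat mul e g a) w) + d w (act (gpow_nat mul e g b) w).
Proof.
  rewrite gpow_nat_add, act_mul.
  pose proof (d_triangle w (act (gpow_nat mul e g a) w)
                (act (gpow_nat mul e g a) (act (gpow_nat mul e g b) w))).
  rewrite act_dist in *. lra.
Qed.

Lemma dist_orbit_mul (w : X) (q n : nat) :
  d w (act (gpow_nat mul e g (q * n)) w) <= INR q * d w (act (gpow_nat mul e g n) w).
Proof.
  induction q as [|q IH].
  - simpl. rewrite act_1, d_refl. lra.
  - change (S q * n)%nat with (n + q * n)%nat.
    pose proof (dist_orbit_add w n (q * n)). rewrite S_INR. lra.
Qed.

Lemma dist_orbit_basepoint (o w : X) (N : nat) :
  d o (act (gpow_nat mul e g N) o) <= 2 * d o w + d w (act (gpow_nat mul e g N) w).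
Proof.
  set (h := gpow_nat mul e g N).
  pose proof (d_triangle o w (act h o)). pose proof (d_triangle w (act h w) (act h o)).
  rewrite act_dist, (d_sym w o) in *. lra.
Qed.

(* Divide [N] by [n]: [g^N = (g^n)^q g^r] with [r < n]. *)
Lemma dist_orbit_le_linear (o w : X) (n N : nat) :
  (0 < n)%nat ->
  d o (act (gpow_nat mul e g N) o) <=
  INR N * (d w (act (gpow_nat mul e g n) w) / INR n)
  + (2 * d o w + INR n * d w (act (gpow_nat mul e g 1) w)).
Proof.
  intros Hn.
  assert (Hnpos : 0 < INR n) by (apply lt_0_INR; lia).
  pose proof (Nat.div_mod N n ltac:(lia)) as HN.
  pose proof (Nat.mod_upper_bound N n ltac:(lia)) as Hr.
  set (q := (N / n)%nat) in *. set (r := (N mod n)%nat) in *.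
  assert (Hsplit : d w (act (gpow_nat mul e g N) w) <=
           INR q * d w (act (gpow_nat mul e g n) w) + INR r * d w (act (gpow_nat mul e g 1) w)).
  { rewrite HN, Nat.mul_comm.
    pose proof (dist_orbit_add w (q * n) r).
    pose proof (dist_orbit_mul w q n).
    pose proof (dist_orbit_mul w r 1) as Hr1. rewrite Nat.mul_1_r in Hr1. lra. }
  assert (Hr_le : INR r * d w (act (gpow_nat mul e g 1) w)
                  <= INR n * d w (act (gpow_nat mul e g 1) w)).
  { apply Rmult_le_compat_r; [apply d_nonneg | apply le_INR; lia]. }
  assert (Hq_le : INR q * d w (act (gpow_nat mul e g n) w)
                  <= INR N * (d w (act (gpow_nat mul e g n) w) / INR n)).
  { replace (INR q * d w (act (gpow_nat mul e g n) w))
      with (INR (q * n) * (d w (act (gpow_nat mul e g n) w) / INR n))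
      by (rewrite mult_INR; field; lra).
    apply Rmult_le_compat_r.
    - apply Rdiv_le_0_compat; [apply d_nonneg | lra].
    - apply le_INR; lia. }
  pose proof (dist_orbit_basepoint o w N). lra.
Qed.

Lemma asymp_trans_le (o w : X) (n : nat) :
  (0 < n)%nat ->
  asymp_trans d mul e act g o <= d w (act (gpow_nat mul e g n) w) / INR n.
Proof.
  intros Hn.
  apply real_LimSup_div_le with (B := 2 * d o w + INR n * d w (act (gpow_nat mul e g 1) w)).
  - apply Rdiv_le_0_compat; [apply d_nonneg | apply lt_0_INR; lia].
  - intros N. now apply dist_orbit_le_linear.
Qed.

Lemma gpow_cancel (m : Z) (x : X) :
  act (gpow mul e inv g m) (act (gpow mul e inv g (- m)) x) = x.
Proof.
  destruct G_group as (_ & mul_1l & _ & mul_Vl & mul_Vr).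
  destruct m as [|p|p]; simpl; rewrite <- act_mul.
  - now rewrite mul_1l, act_1.
  - now rewrite mul_Vr, act_1.
  - now rewrite mul_Vl, act_1.
Qed.

Lemma dist_orbit_gpow (w : X) (m : Z) :
  d w (act (gpow mul e inv g m) w) = d w (act (gpow_nat mul e g (Z.abs_nat m)) w).
Proof.
  destruct m as [|p|p]; try reflexivity.
  rewrite <- (act_dist (gpow mul e inv g (Zpos p))), (gpow_cancel (Zpos p)).
  apply d_sym.
Qed.

Lemma asymp_trans_lower_bound (o w : X) (m : Z) :
  IZR (Z.abs m) * asymp_trans d mul e act g o <= d w (act (gpow mul e inv g m) w).
Proof.
  rewrite dist_orbit_gpow, <- Nat2Z.inj_abs_nat, <- INR_IZR_INZ.
  destruct (Nat.eq_dec (Z.abs_nat m) 0) as [H0 | Hpos].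
  - rewrite H0. simpl. rewrite Rmult_0_l. apply d_nonneg.
  - assert (Hn : 0 < INR (Z.abs_nat m)) by (apply lt_0_INR; lia).
    pose proof (asymp_trans_le o w (Z.abs_nat m) ltac:(lia)) as Hle.
    apply Rmult_le_compat_l with (r := INR (Z.abs_nat m)) in Hle; [|lra].
    replace (INR (Z.abs_nat m) * (d w (act (gpow_nat mul e g (Z.abs_nat m)) w) / INR (Z.abs_nat m)))
      with (d w (act (gpow_nat mul e g (Z.abs_nat m)) w)) in Hle by (field; lra).
    exact Hle.
Qed.

End Orbits.

Lemma constricting_quasi_equivariant {X G : Type} {d : X -> X -> R}
  {mul : G -> G -> G} {e : G} {inv : G -> G} {act : G -> X -> X}
  {Gam : R -> R -> (R -> X) -> Prop} {mu nu : R}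
  {g : G} {A : X -> Prop} {pi : X -> X} {delta : R} :
  path_system_group d mul e inv act Gam mu nu ->
  (forall (z : Z) x, A x -> A (act (gpow mul e inv g z) x)) ->
  constricting_map d Gam A pi delta ->
  forall (m : Z) (y : X),
    d (pi (act (gpow mul e inv g m) y)) (act (gpow mul e inv g m) (pi y))
    <= 5 * delta + (Rabs mu * delta + Rabs nu).
Proof.
  intros (Hmetric & _ & Hgroup & Hact & _ & Hsys) A_inv Hpi m y.
  destruct Hsys as (Hpath & Gam_invariant & Hsub & Hconn & Hqg).
  assert (Hint : forall a b f, Gam a b f -> a <= b) by (intros a b f Hf; apply (Hpath _ _ _ Hf)).
  set (h := gpow mul e inv g m). set (k := gpow mul e inv g (- m)).
  assert (Hkh : forall x, act k (act h x) = x).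
  { intros x. unfold h, k. rewrite <- (Z.opp_involutive m) at 2.
    apply (gpow_cancel Hgroup Hact). }
  assert (Hconj : constricting_map d Gam A (fun x => act h (pi (act k x))) delta).
  { apply (constricting_map_conj Hpi).
    - apply (gpow_cancel Hgroup Hact).
    - apply Hact.
    - apply A_inv.
    - apply A_inv.
    - intros a b f. apply Gam_invariant. }
  pose proof (constricting_maps_close Hmetric Hint Hsub Hconn Hqg (act h y) Hpi Hconj) as Hclose.
  simpl in Hclose. rewrite Hkh in Hclose. exact Hclose.
Qed.

Theorem mainTheorem17 (X G : Type) (d : X -> X -> R)
  (mul : G -> G -> G) (e : G) (inv : G -> G) (act : G -> X -> X)
  (Gam : R -> R -> (R -> X) -> Prop) (mu nu : R)
  (g : G) (A : X -> Prop) (pi : X -> X) (delta : R) :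
  path_system_group d mul e inv act Gam mu nu ->
  constricting_element d mul e inv act Gam g A pi delta ->
  exists theta : R, 0 <= theta /\
    forall (o x x' : X) (m : Z),
      d (pi x) (pi (act (gpow mul e inv g m) x')) >=
        IZR (Z.abs m) * asymp_trans d mul e act g o - d (pi x) (pi x') - theta.
Proof.
  intros Hgrp (_ & A_inv & (o0 & _) & Hpi).
  pose proof Hgrp as (Hmetric & _ & Hgroup & Hact & _).
  pose proof (constricting_delta_nonneg Hmetric Hpi o0) as Hdelta.
  exists (5 * delta + (Rabs mu * delta + Rabs nu)). split.
  - pose proof (Rabs_pos mu). pose proof (Rabs_pos nu).
    pose proof (Rmult_le_pos _ _ (Rabs_pos mu) Hdelta). lra.
  - intros o x x' m.
    set (h := gpow mul e inv g m).
    pose proof (constricting_quasi_equivariant Hgrp A_inv Hpi m x') as Hequiv.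
    pose proof (asymp_trans_lower_bound Hmetric Hgroup Hact g o (pi x') m) as Htrans.
    destruct Hmetric as (_ & _ & d_sym & d_triangle).
    pose proof (d_triangle (pi x') (pi x) (pi (act h x'))).
    pose proof (d_triangle (pi x') (pi (act h x')) (act h (pi x'))).
    rewrite (d_sym (pi x') (pi x)) in *. fold h in Hequiv, Htrans. lra.
Qed.
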